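(* Let $(\mathcal{X},\mathcal{B},\lambda)$ be a measure space with $\lambda$ positive and $\sigma$-finite, $P$ a probability measure with density $f\in\mathcal{L}^2(\mathcal{X},\lambda)$ with respect to $\lambda$, and $X_1,\dots,X_N$ i.i.d. with law $P$. Let $f_1,\dots,f_m\in\mathcal{L}^2$ with $D_k=\int f_k^2d\lambda>0$, and assume there are known constants $C_k>0$ with $|f_k(x)|\le\sqrt{C_kD_k}$ for all $x\in\mathcal{X}$ and all $k$. Let $\varepsilon>0$ and, for each $k$, let $\beta_{k,1},\beta_{k,2}$ be real numbers with $0<\beta_{k,j}<\frac{N}{\sqrt{C_kD_k}}$, $j\in\{1,2\}$. Then with $P^{\otimes N}$-probability at least $1-\varepsilon$, for all $k\in\{1,\dots,m\}$, $$\alpha^{\inf}_k(\varepsilon,\beta_{k,1})\le\overline{\alpha}_k\le\alpha^{\sup}_k(\varepsilon,\beta_{k,2}),$$ where $$\alpha^{\sup}_k(\varepsilon,\beta)=\frac{N-N\exp\left[\frac1N\sum_{i=1}^N\log\left(1-\frac{\beta}{N}f_k(X_i)\right)-\frac{\log\frac{2m}{\varepsilon}}{N}\right]}{D_k\beta},$$ $$\alpha^{\inf}_k(\varepsilon,\beta)=\frac{N\exp\left[\frac1N\sum_{i=1}^N\log\left(1+\frac{\beta}{N}f_k(X_i)\right)-\frac{\log\frac{2m}{\varepsilon}}{N}\right]-N}{D_k\beta}.$$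
   Context: $\overline{\alpha}_k=\arg\min_{\alpha\in\mathbb{R}}\int(\alpha f_k-f)^2d\lambda=\frac{\int f_kf\,d\lambda}{D_k}$. *)

From HB Require Import structures.
From mathcomp Require Import all_boot all_order all_algebra.
From mathcomp Require Import all_classical all_reals all_analysis.
Set Implicit Arguments. Unset Strict Implicit. Unset Printing Implicit Defensive.
Import Order.TTheory GRing.Theory Num.Theory.
Local Open Scope classical_set_scope.
Local Open Scope ring_scope.

(* X : 'I_N -> Omega -> T is an i.i.d. sample of law P on the probability
   space (Omega, Pr): each X i is measurable, has law P, and the family is
   mutually independent (product rule for every family of measurable sets;
   taking A i = setT recovers every finite subfamily). *)
Definition iid_sample {R : realType} {dO dT : measure_display}
  {Omega : measurableType dO} {T : measurableType dT}
  (Pr : probability Omega R) (P : probability T R) (N : nat)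
  (X : 'I_N -> Omega -> T) : Prop :=
  (forall i, measurable_fun setT (X i)) /\
  (forall i (A : set T), measurable A -> Pr (X i @^-1` A) = P A) /\
  (forall A : 'I_N -> set T, (forall i, measurable (A i)) ->
     Pr (\bigcap_(i in [set: 'I_N]) (X i @^-1` A i)) =
     (\prod_(i < N) Pr (X i @^-1` A i))%E).

Definition alpha_sup {R : realType} {T : Type} (N m : nat) (eps Dk beta : R)
  (fk : T -> R) (xs : 'I_N -> T) : R :=
  (N%:R - N%:R * expR (N%:R^-1 * (\sum_(i < N) ln (1 - beta / N%:R * fk (xs i)))
                        - ln (2 * m%:R / eps) / N%:R)) / (Dk * beta).

Definition alpha_inf {R : realType} {T : Type} (N m : nat) (eps Dk beta : R)
  (fk : T -> R) (xs : 'I_N -> T) : R :=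
  (N%:R * expR (N%:R^-1 * (\sum_(i < N) ln (1 + beta / N%:R * fk (xs i)))
                 - ln (2 * m%:R / eps) / N%:R) - N%:R) / (Dk * beta).

Arguments alpha_sup {R T} N m eps Dk beta fk xs.
Arguments alpha_inf {R T} N m eps Dk beta fk xs.

(* Fix k and a signed step b in {beta_k1, - beta_k2}.  The bounds on f_k and
   beta make Z = prod_i (1 + b/N f_k(X_i)) a nonnegative random variable, and
   independence gives E[Z] = q^N with q = 1 + b/N int f_k f dlam.  By Markov's
   inequality, Z >= (2m/eps) q^N has probability at most eps/(2m); off this
   event, taking logarithms turns Z < (2m/eps) q^N into the bound on alpha_k
   carried by b.  A union bound over the 2m events concludes.
   The mean of Z is computed by replacing one factor at a time by indicators,
   and integrals against P by integrals against the density; both reductions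
   rest on approximating nonnegative functions by simple ones. *)

From HB Require Import structures.
From mathcomp Require Import all_boot all_order all_algebra.
From mathcomp Require Import all_classical all_reals all_analysis.
From mathcomp Require Import finmap measurable_realfun ring lra.
Import Order.TTheory GRing.Theory Num.Theory.
Import HBNNSimple numFieldNormedType.Exports.
Set Implicit Arguments.
Unset Strict Implicit.
Unset Printing Implicit Defensive.

Local Open Scope classical_set_scope.
Local Open Scope ring_scope.

Section integral_comp_mul.
Local Open Scope ereal_scope.
Context (R : realType) (dT : measure_display) (T : measurableType dT).
Context (d : measure_display) (O : measurableType d) (mu : {measure set O -> \bar R}).
Context (p : O -> T) (g : O -> R).
Hypotheses (mp : measurable_fun setT p) (mg : measurable_fun setT g).
Hypothesis g0 : forall x, (0 <= g x)%R.

Let measurable_comp_mul (h : T -> R) : measurable_fun setT h ->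
  measurable_fun setT (fun x => ((h (p x) * g x)%R)%:E).
Proof.
by move=> mh; apply/measurable_EFinP; apply: measurable_funM => //; exact: measurableT_comp.
Qed.

Lemma integral_nnsfun_comp_mul (s : {nnsfun T >-> R}) :
  \int[mu]_x ((s (p x) * g x)%R)%:E =
  \sum_(y <- fset_set (range s))
     y%:E * \int[mu]_x ((\1_(s @^-1` [set y]) (p x) * g x)%R)%:E.
Proof.
have y0 y : y \in fset_set (range s) -> (0 <= y)%R.
  by rewrite in_fset_set; [move=> /set_mem [t _ <-]; exact: fun_ge0 | exact: fimfunP].
have mind y c : measurable_fun setT
    (fun x => ((c * \1_(s @^-1` [set y]) (p x) * g x)%R)%:E).
  apply/measurable_EFinP; apply: measurable_funM => //; apply: measurable_funM => //.
  by apply: measurableT_comp mp; apply: measurable_indic; exact: measurable_funPTI.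
(* [`|y|] instead of [y] makes every summand nonnegative, as [ge0_integral_sum] requires. *)
transitivity (\int[mu]_x (\sum_(y <- fset_set (range s))
    ((`|y| * \1_(s @^-1` [set y]) (p x) * g x)%R)%:E)).
  apply: eq_integral => x _; rewrite fimfunE fsbig_finite; last exact: fimfunP.
  rewrite /= big_distrl /= -sumEFin.
  by apply: eq_big_seq => y /y0 y0'; rewrite ger0_norm.
rewrite ge0_integral_sum //; last by move=> y x _; rewrite lee_fin !mulr_ge0.
apply: eq_big_seq => y /y0 y0'.
under eq_integral do rewrite -mulrA EFinM.
rewrite ge0_integralZl_EFin //= ?ger0_norm // => [x _|]; first by rewrite lee_fin mulr_ge0.
by have := mind y 1%R; apply: eq_measurable_fun => x _; rewrite mul1r.
Qed.

Lemma integral_comp_mul_nnsfun_approx (h : T -> R)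
    (mh : measurable_fun setT (EFin \o h)) : (forall t, 0 <= h t)%R ->
  \int[mu]_x ((h (p x) * g x)%R)%:E =
  limn (fun n => \int[mu]_x ((nnsfun_approx measurableT mh n (p x) * g x)%R)%:E).
Proof.
move=> h0; set s := nnsfun_approx measurableT mh.
have cvg_s t : (s n t)%R @[n --> \oo] --> h t.
  have := @cvg_approx _ _ _ setT (EFin \o h) t (fun x _ => h0 x) I (ltry _).
  by apply: cvg_trans; apply: near_eq_cvg; near=> n; rewrite /s nnsfun_approxE.
rewrite -monotone_convergence //.
- apply: eq_integral => x _; apply/esym/cvg_lim => //.
  by apply: cvg_EFin; [exact: nearW | exact: cvgMr_tmp].
- by move=> n; apply: measurable_comp_mul; exact: measurable_funP.
- by move=> n x _; rewrite lee_fin mulr_ge0.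
- move=> x _ m n mn; rewrite lee_fin ler_wpM2r //.
  by have /lefP := nd_nnsfun_approx measurableT mh mn; apply.
Unshelve. all: by end_near.
Qed.

End integral_comp_mul.

Lemma eq_integral_comp_mul (R : realType) (dT : measure_display) (T : measurableType dT)
  (d1 d2 : measure_display) (O1 : measurableType d1) (O2 : measurableType d2)
  (mu1 : {measure set O1 -> \bar R}) (mu2 : {measure set O2 -> \bar R})
  (p1 : O1 -> T) (p2 : O2 -> T) (g1 : O1 -> R) (g2 : O2 -> R) :
  measurable_fun setT p1 -> measurable_fun setT p2 ->
  measurable_fun setT g1 -> measurable_fun setT g2 ->
  (forall x, 0 <= g1 x) -> (forall x, 0 <= g2 x) ->
  (forall A, measurable A -> (\int[mu1]_x ((\1_A (p1 x) * g1 x)%R)%:E =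
                              \int[mu2]_x ((\1_A (p2 x) * g2 x)%R)%:E)%E) ->
  forall h : T -> R, measurable_fun setT h -> (forall t, 0 <= h t) ->
  (\int[mu1]_x ((h (p1 x) * g1 x)%R)%:E = \int[mu2]_x ((h (p2 x) * g2 x)%R)%:E)%E.
Proof.
move=> mp1 mp2 mg1 mg2 g10 g20 eq_indic h mh h0.
have mhE : measurable_fun setT (EFin \o h) by exact/measurable_EFinP.
rewrite (integral_comp_mul_nnsfun_approx mu1 mp1 mg1 g10 mhE h0).
rewrite (integral_comp_mul_nnsfun_approx mu2 mp2 mg2 g20 mhE h0); congr (limn _).
apply/funext => n; rewrite !integral_nnsfun_comp_mul //.
by apply: eq_bigr => y _; rewrite eq_indic.
Qed.

Section iid_sample_expectation.
Local Open Scope ereal_scope.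
Context (R : realType) (dO dT : measure_display) (Omega : measurableType dO)
  (T : measurableType dT) (Pr : probability Omega R) (P : probability T R)
  (N : nat) (X : 'I_N -> Omega -> T).
Hypothesis iid : iid_sample Pr P X.

Let mX i : measurable_fun setT (X i). Proof. by case: iid. Qed.

Let lawX i A : measurable A -> Pr (X i @^-1` A) = P A.
Proof. by case: iid => _ [+ _]; apply. Qed.

Let indepX (A : 'I_N -> set T) : (forall i, measurable (A i)) ->
  Pr (\bigcap_(i in [set: 'I_N]) (X i @^-1` A i)) = \prod_(i < N) Pr (X i @^-1` A i).
Proof. by case: iid => _ [_]; apply. Qed.

Let prod_indic_comp (A : 'I_N -> set T) w :
  (\prod_(i < N) \1_(A i) (X i w) =
   \1_(\bigcap_(i in [set: 'I_N]) (X i @^-1` A i)) w :> R)%R.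
Proof.
have [allA|] := pselect (forall i, A i (X i w)).
  rewrite indicE mem_set; last by move=> i _; exact: allA.
  by rewrite big1 // => i _; rewrite indicE mem_set.
rewrite -existsNE => -[i nAi]; rewrite indicE memNset; last by move=> /(_ i I).
by rewrite (bigD1 i) //= indicE memNset // mul0r.
Qed.

Let expectation_prod_indic (A : 'I_N -> set T) : (forall i, measurable (A i)) ->
  \int[Pr]_w ((\prod_(i < N) \1_(A i) (X i w))%R)%:E =
  \prod_(i < N) \int[P]_t (\1_(A i) t)%:E.
Proof.
move=> mA; under eq_integral do rewrite prod_indic_comp.
rewrite integral_indic //; last first.
  by apply: fin_bigcap_measurable => // i _; rewrite -[X i @^-1` _]setTI; exact: mX.
rewrite setIT; apply: etrans (indepX mA) _; apply: eq_bigr => i _.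
by rewrite integral_indic // setIT lawX.
Qed.

Let replace_at (j : 'I_N) (k : T -> R) (h : 'I_N -> T -> R) i :=
  if i == j then k else h i.

Section expectation_prod_step.
Variables (j : 'I_N) (h : 'I_N -> T -> R).
Hypotheses (mh : forall i, measurable_fun setT (h i)) (h0 : forall i t, (0 <= h i t)%R).
Hypothesis fin_h : forall i, \int[P]_t (h i t)%:E \is a fin_num.

Let G w := (\prod_(i < N | i != j) h i (X i w))%R.
Let c := (\prod_(i < N | i != j) fine (\int[P]_t (h i t)%:E))%R.

Let cE : c%:E = \prod_(i < N | i != j) \int[P]_t (h i t)%:E.
Proof. by rewrite -prodEFin; apply: eq_bigr => i _; rewrite fineK. Qed.

Let prod_comp_split (k : 'I_N -> T -> R) w :
  (\prod_(i < N) k i (X i w) = k j (X j w) * \prod_(i < N | i != j) k i (X i w))%R.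
Proof. by rewrite (bigD1 j). Qed.

(* Both sides integrate [h j] against weights (the other factors, resp. the
   product [c] of their means) that agree on indicators by hypothesis. *)
Lemma expectation_prod_replace_at :
  (forall B, measurable B ->
    \int[Pr]_w ((\prod_(i < N) replace_at j \1_B h i (X i w))%R)%:E =
    \prod_(i < N) \int[P]_t (replace_at j \1_B h i t)%:E) ->
  \int[Pr]_w ((\prod_(i < N) h i (X i w))%R)%:E = \prod_(i < N) \int[P]_t (h i t)%:E.
Proof.
move=> indic_j.
have mG : measurable_fun setT G.
  rewrite /G; under eq_fun do rewrite big_mkcond /=.
  by apply: measurable_prod => i _; case: (i != j) => //; exact: measurableT_comp.
have G0 w : (0 <= G w)%R by apply: prodr_ge0 => i _.
have c0 : (0 <= c)%R.
  by apply: prodr_ge0 => i _; apply: fine_ge0; apply: integral_ge0 => t _; rewrite lee_fin.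
have eq_indic B : measurable B -> \int[Pr]_w ((\1_B (X j w) * G w)%R)%:E =
                                  \int[P]_t ((\1_B (id t) * c)%R)%:E.
  move=> mB; transitivity (\int[Pr]_w
      ((\prod_(i < N) replace_at j \1_B h i (X i w))%R)%:E).
    apply: eq_integral => w _; rewrite prod_comp_split /replace_at eqxx.
    by congr (_ * _)%:E; apply: eq_bigr => i /negbTE ->.
  rewrite indic_j // (bigD1 j) //= {1}/replace_at eqxx.
  rewrite (eq_bigr (fun i => \int[P]_t (h i t)%:E)); last first.
    by move=> i /negbTE ij; rewrite /replace_at ij.
  rewrite -cE; under [RHS]eq_integral do rewrite EFinM.
  rewrite ge0_integralZr //; exact/measurable_EFinP/measurable_indic.
under eq_integral do rewrite prod_comp_split.
rewrite (eq_integral_comp_mul (mX j) (@measurable_id _ _ setT) mG (measurable_cst c) G0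
  (fun=> c0) eq_indic (mh j) (h0 j)).
rewrite (bigD1 j) //= -cE; under eq_integral do rewrite EFinM.
rewrite ge0_integralZr //; first exact/measurable_EFinP.
by move=> t _; rewrite lee_fin.
Qed.

End expectation_prod_step.

Let expectation_prod_indic_from n (h : 'I_N -> T -> R) (A : 'I_N -> set T) :
  (forall i, measurable (A i)) -> (forall i, measurable_fun setT (h i)) ->
  (forall i t, (0 <= h i t)%R) -> (forall i, \int[P]_t (h i t)%:E \is a fin_num) ->
  (forall i : 'I_N, (n <= i)%N -> h i = \1_(A i)) ->
  \int[Pr]_w ((\prod_(i < N) h i (X i w))%R)%:E = \prod_(i < N) \int[P]_t (h i t)%:E.
Proof.
elim: n h A => [|n IH] h A mA mh h0 fin_h hA.
  transitivity (\int[Pr]_w ((\prod_(i < N) \1_(A i) (X i w))%R)%:E).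
    by apply: eq_integral => w _; congr (_ %:E); apply: eq_bigr => i _; rewrite hA.
  by rewrite expectation_prod_indic //; apply: eq_bigr => i _; rewrite hA.
have [nN|Nn] := ltnP n N; last first.
  apply: (IH h A) => // i ni.
  by have := ltn_ord i; rewrite ltnNge (leq_trans Nn ni).
pose j := Ordinal nN.
apply: (@expectation_prod_replace_at j h mh h0 fin_h) => B mB.
apply: (IH _ (fun i => if i == j then B else A i)).
- by move=> i; case: ifP.
- by move=> i; rewrite /replace_at; case: ifP => // _; exact: measurable_indic.
- by move=> i t; rewrite /replace_at; case: ifP.
- move=> i; rewrite /replace_at; case: ifP => // _.
  by rewrite integral_indic // setIT fin_num_measure.
- move=> i ni /=; rewrite /replace_at.
  have [//|ij] := eqVneq i j.
  apply: hA; rewrite ltn_neqAle ni andbT.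
  by apply: contra ij => /eqP e; apply/eqP/val_inj.
Qed.

Lemma expectation_prod_iid (h : 'I_N -> T -> R) :
  (forall i, measurable_fun setT (h i)) -> (forall i t, (0 <= h i t)%R) ->
  (forall i, \int[P]_t (h i t)%:E \is a fin_num) ->
  \int[Pr]_w ((\prod_(i < N) h i (X i w))%R)%:E = \prod_(i < N) \int[P]_t (h i t)%:E.
Proof.
move=> mh h0 fin_h; apply: (@expectation_prod_indic_from N h (fun=> setT)) => // i.
by rewrite leqNgt ltn_ord.
Qed.

End iid_sample_expectation.

Lemma probability_ge_cst (R : realType) (d : measure_display) (O : measurableType d)
  (Pr : probability O R) (g : O -> R) (c : R) :
  measurable_fun setT g -> 0 <= c -> (forall w, c <= g w) ->
  (c%:E <= \int[Pr]_w (g w)%:E)%E.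
Proof.
move=> mg c0 cg; rewrite -[c%:E]mule1 -(probability_setT Pr) -integral_cst //.
apply: ge0_le_integral => //; first exact/measurable_EFinP.
by move=> w _; rewrite lee_fin.
Qed.

Lemma markov_nonneg (R : realType) (d : measure_display) (O : measurableType d)
  (Pr : probability O R) (Z : O -> R) (K e : R) :
  measurable_fun setT Z -> (forall w, 0 <= Z w) -> 0 < K -> 0 < e ->
  (\int[Pr]_w (Z w)%:E = e%:E)%E -> (Pr [set w | (K * e <= Z w)%R] <= K^-1%:E)%E.
Proof.
move=> mZ Z0 K0 e0 EZ.
have mZE : measurable_fun setT (EFin \o Z) by exact/measurable_EFinP.
have mS : measurable [set w | K * e <= Z w].
  by rewrite -[X in measurable X]setTI; exact: measurable_fun_le.
have : ((K * e)%:E * Pr [set w | (K * e <= Z w)%R] <= e%:E)%E.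
  rewrite -EZ; under eq_integral do rewrite -[(Z _)%:E]gee0_abs ?lee_fin //.
  apply: le_trans (le_integral_abse Pr measurableT mZE (mulr_gt0 K0 e0)).
  rewrite setTI le_eqVlt; apply/orP; left; apply/eqP; congr (_ * Pr _)%E.
  by apply/seteqP; split => w /=; rewrite lee_fin ger0_norm.
rewrite -(fineK (fin_num_measure Pr _ mS)) -EFinM !lee_fin => le_mean.
rewrite -(ler_pM2l (mulr_gt0 K0 e0)); apply: (le_trans le_mean).
by rewrite [leRHS](_ : _ = e) //; field; rewrite gt_eqF.
Qed.

Lemma measure_bigsetU_le (R : realType) (d : measure_display) (O : measurableType d)
  (mu : {measure set O -> \bar R}) (I : Type) (s : seq I) (F : I -> set O) :
  (forall i, measurable (F i)) ->
  (mu (\big[setU/set0]_(i <- s) F i) <= \sum_(i <- s) mu (F i))%E.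
Proof.
move=> mF; elim: s => [|i s IH]; first by rewrite !big_nil measure0.
rewrite !big_cons; apply: le_trans (measureU2 _ _ _) _ => //.
  exact: bigsetU_measurable.
exact: leeD.
Qed.

Lemma probability_setC_bigsetU_ge (R : realType) (d : measure_display)
  (O : measurableType d) (Pr : probability O R) (n : nat) (E : 'I_n -> set O) (delta : R) :
  (forall k, measurable (E k)) -> (forall k, (Pr (E k) <= delta%:E)%E) ->
  ((1 - n%:R * delta)%:E <= Pr (~` \big[setU/set0]_(k < n) E k))%E.
Proof.
move=> mE PE; rewrite probability_setC; last exact: bigsetU_measurable.
rewrite EFinB; apply: leeB => //; apply: le_trans (measure_bigsetU_le _ _ mE) _.
apply: le_trans (lee_sum (g := fun=> delta%:E) _ (fun k _ => PE k)) _.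
by rewrite sumEFin sumr_const card_ord mulr_natl.
Qed.

Lemma natr_mul_div_le (R : numFieldType) (n : nat) (x : R) : 0 <= x -> n%:R * (x / n%:R) <= x.
Proof.
have [->|n0] := posnP n; first by rewrite mul0r.
by rewrite mulrC divfK // pnatr_eq0 -lt0n.
Qed.

Lemma normr_div_mul_lt1 (R : realFieldType) (N : nat) (b s : R) :
  0 < s -> `|b| < N%:R / s -> `|b / N%:R| * s < 1.
Proof.
move=> s0 bN; have N0 : 0 < (N%:R : R).
  by move: bN; rewrite ltr_pdivlMr // => /(le_lt_trans (mulr_ge0 (normr_ge0 b) (ltW s0))).
by rewrite normrM normfV normr_nat mulrAC ltr_pdivrMr // mul1r -ltr_pdivlMr.
Qed.

Lemma add1_mul_gt0 (R : realDomainType) (a s y : R) :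
  `|y| <= s -> `|a| * s < 1 -> 0 < 1 + a * y.
Proof.
move=> ys as1; have : `|a * y| < 1.
  by rewrite normrM (le_lt_trans (ler_wpM2l (normr_ge0 a) ys)).
rewrite ltr_norml => /andP[h _]; lra.
Qed.

Lemma alpha_supE (R : realType) (T : Type) (N m : nat) (eps D b : R)
  (Y : T -> R) (xs : 'I_N -> T) :
  alpha_sup N m eps D b Y xs = alpha_inf N m eps D (- b) Y xs.
Proof.
rewrite /alpha_sup /alpha_inf.
have -> : \sum_(i < N) ln (1 + - b / N%:R * Y (xs i)) =
          \sum_(i < N) ln (1 - b / N%:R * Y (xs i)).
  by apply: eq_bigr => i _; rewrite !mulNr.
by rewrite mulrN invrN mulrN -mulNr opprB.
Qed.

(* With [b > 0] this says [a < alpha_inf b]; with [b = - beta] it says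
   [alpha_sup beta < a], by [alpha_supE]. *)
Definition alpha_deviation (R : realType) (T : Type) (N m : nat) (eps D b : R)
  (Y : T -> R) (xs : 'I_N -> T) (a : R) : bool :=
  0 < (alpha_inf N m eps D b Y xs - a) * b.
Arguments alpha_deviation {R T} N m eps D b Y xs a.

Lemma alpha_boundsP (R : realType) (T : Type) (N m : nat) (eps D b1 b2 a : R)
  (Y : T -> R) (xs : 'I_N -> T) : 0 < b1 -> 0 < b2 ->
  alpha_inf N m eps D b1 Y xs <= a /\ a <= alpha_sup N m eps D b2 Y xs <->
  ~ (alpha_deviation N m eps D b1 Y xs a \/ alpha_deviation N m eps D (- b2) Y xs a).
Proof.
move=> b1_0 b2_0; rewrite /alpha_deviation alpha_supE mulrN oppr_gt0.
rewrite pmulr_lgt0 // pmulr_llt0 // subr_gt0 subr_lt0 !leNgt.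
split=> [[nA nB] [A|B]|nAB]; [by rewrite A in nA|by rewrite B in nB|].
by split; apply/negP => ?; apply: nAB; [left|right].
Qed.

Lemma mul_expn_le_prod_of_lt_expR (R : realType) (N : nat) (u : 'I_N -> R) (q K : R) :
  (0 < N)%N -> (forall i, 0 < u i) -> 0 < q -> 0 < K ->
  q < expR (N%:R^-1 * (\sum_(i < N) ln (u i)) - ln K / N%:R) ->
  K * q ^+ N <= \prod_(i < N) u i.
Proof.
move=> N0 u0 q0 K0 lt_q.
have NR : (N%:R : R) != 0 by rewrite pnatr_eq0 -lt0n.
have expR_mean : expR (N%:R^-1 * (\sum_(i < N) ln (u i)) - ln K / N%:R) ^+ N =
                 (\prod_(i < N) u i) / K.
  rewrite -expRM_natl.
  have -> : N%:R * (N%:R^-1 * (\sum_(i < N) ln (u i)) - ln K / N%:R) =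
            \sum_(i < N) ln (u i) - ln K by field.
  rewrite expRD expRN lnK ?posrE // expR_sum.
  by congr (_ / _); apply: eq_bigr => i _; rewrite lnK // posrE.
have : q ^+ N < (\prod_(i < N) u i) / K.
  by rewrite -expR_mean ltrXn2r ?ltW // -lt0n.
by rewrite ltr_pdivlMr // mulrC => /ltW.
Qed.

Lemma alpha_deviation_le_prod (R : realType) (T : Type) (N m : nat)
  (eps D b EY : R) (Y : T -> R) (xs : 'I_N -> T) :
  (0 < N)%N -> (0 < m)%N -> 0 < eps -> 0 < D ->
  (forall i, 0 < 1 + b / N%:R * Y (xs i)) -> 0 < 1 + b / N%:R * EY ->
  alpha_deviation N m eps D b Y xs (EY / D) ->
  2 * m%:R / eps * (1 + b / N%:R * EY) ^+ N <= \prod_(i < N) (1 + b / N%:R * Y (xs i)).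
Proof.
rewrite /alpha_deviation => N0 m0 eps0 D0 u0 q0 dev.
have b0 : b != 0 by apply: contraTneq dev => ->; rewrite mulr0 ltxx.
have N0' : 0 < (N%:R : R) by rewrite ltr0n.
apply: mul_expn_le_prod_of_lt_expR => //; first by rewrite !mulr_gt0 ?ltr0n ?invr_gt0.
rewrite /alpha_inf in dev; set e := expR _ in dev *.
have dev_eq : ((N%:R * e - N%:R) / (D * b) - EY / D) * b =
              N%:R / D * (e - (1 + b / N%:R * EY)).
  by field; rewrite b0 !gt_eqF.
by rewrite dev_eq pmulr_rgt0 ?divr_gt0 // subr_gt0 in dev.
Qed.

Lemma measurable_alpha_inf (R : realType) (dO dT : measure_display)
  (Omega : measurableType dO) (T : measurableType dT) (N m : nat)
  (X : 'I_N -> Omega -> T) (Y : T -> R) (eps D b : R) :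
  (forall i, measurable_fun setT (X i)) -> measurable_fun setT Y ->
  measurable_fun setT (fun w => alpha_inf N m eps D b Y (fun i => X i w)).
Proof.
move=> mX mY; rewrite /alpha_inf; apply: measurable_funM => //.
apply: measurable_funB => //; apply: measurable_funM => //.
apply: measurableT_comp => //; apply: measurable_funB => //; apply: measurable_funM => //.
apply: measurable_sum => i; apply: measurableT_comp; first exact: measurable_ln.
apply: measurable_funD => //; apply: measurable_funM => //.
exact: measurableT_comp.
Qed.

Lemma measurable_alpha_deviation (R : realType) (dO dT : measure_display)
  (Omega : measurableType dO) (T : measurableType dT) (N m : nat)
  (X : 'I_N -> Omega -> T) (Y : T -> R) (eps D b c : R) :
  (forall i, measurable_fun setT (X i)) -> measurable_fun setT Y ->
  measurable [set w | alpha_deviation N m eps D b Y (fun i => X i w) c].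
Proof.
move=> mX mY; pose F w := (alpha_inf N m eps D b Y (fun i => X i w) - c) * b.
have mF : measurable_fun setT F.
  by apply: measurable_funM => //; apply: measurable_funB => //; exact: measurable_alpha_inf.
rewrite (_ : [set w | _] = F @^-1` `]0, +oo[); last first.
  by apply/seteqP; split => w /=; rewrite in_itv /= andbT.
by rewrite -[X in measurable X]setTI; exact: mF.
Qed.

Section density_sample.
Local Open Scope ereal_scope.
Context (R : realType) (dT : measure_display) (T : measurableType dT)
  (lam : {measure set T -> \bar R}) (f : T -> R) (P : probability T R).
Hypotheses (mf : measurable_fun setT f) (f0 : {ae lam, forall x, (0 <= f x)%R}).
Hypothesis Pf : forall A, measurable A -> P A = \int[lam]_(x in A) (f x)%:E.

(* [f] is a density of [P] only up to a [lam]-null set; its positive part is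
   one that is nonnegative everywhere. *)
Let fp := f \max (cst 0%R).
Let mfp : measurable_fun setT fp. Proof. exact: measurable_maxr. Qed.
Let fp0 x : (0 <= fp x)%R. Proof. by rewrite /fp /= le_max lexx orbT. Qed.

Let ae_fpE (g : T -> R) : measurable_fun setT g ->
  \int[lam]_x ((g x * fp x)%R)%:E = \int[lam]_x ((g x * f x)%R)%:E.
Proof.
move=> mg; apply: ae_eq_integral => //.
- by apply/measurable_EFinP; apply: measurable_funM.
- by apply/measurable_EFinP; apply: measurable_funM.
- apply: filterS f0 => x fx0 _; congr (_ * _)%:E.
  by rewrite /fp /= max_l.
Qed.

Let integral_density (h : T -> R) : measurable_fun setT h -> (forall t, 0 <= h t)%R ->
  \int[P]_t (h t)%:E = \int[lam]_t ((h t * fp t)%R)%:E.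
Proof.
move=> mh h0; transitivity (\int[P]_t ((h (id t) * 1)%R)%:E).
  by apply: eq_integral => t _; rewrite mulr1.
apply: (eq_integral_comp_mul (@measurable_id _ _ setT) (@measurable_id _ _ setT)
  (measurable_cst (1%R : R)) mfp (fun=> ler01) fp0 _ mh h0) => A mA.
under eq_integral do rewrite mulr1.
rewrite integral_indic // setIT; apply: etrans (Pf mA) _.
rewrite ae_fpE; last exact: measurable_indic.
rewrite integral_mkcond; apply: eq_integral => x _.
by rewrite patchE indicE; case: (x \in A); rewrite ?mul1r ?mul0r.
Qed.

Let integral_fp : \int[lam]_x (fp x)%:E = 1.
Proof.
transitivity (\int[P]_t (cst 1 t)); last first.
  by rewrite integral_cst // mul1e; exact: probability_setT.
apply/esym; apply: etrans (integral_density (measurable_cst (1%R : R)) (fun=> ler01)) _.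
by apply: eq_integral => x _; rewrite mul1r.
Qed.

Lemma expectation_affine_density (Y : T -> R) (a s : R) :
  measurable_fun setT Y -> (forall x, `|Y x| <= s)%R -> (forall x, 0 <= 1 + a * Y x)%R ->
  \int[P]_t ((1 + a * Y t)%R)%:E = ((1 + a * Rintegral lam setT (fun x => Y x * f x))%R)%:E.
Proof.
move=> mY Ys aY0.
have int_fp : lam.-integrable setT (fun x => (fp x)%:E).
  apply/integrableP; split; first exact/measurable_EFinP.
  by under eq_integral do rewrite gee0_abs ?lee_fin //; rewrite integral_fp ltry.
have int_Yfp : lam.-integrable setT (fun x => ((Y x * fp x)%R)%:E).
  apply: (le_integrable measurableT (g := fun x => s%:E * (fp x)%:E)).
  - by apply/measurable_EFinP; apply: measurable_funM.
  - move=> x _; rewrite -EFinM !abse_EFin lee_fin !normrM (ger0_norm (fp0 x)).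
    by rewrite ler_wpM2r // (le_trans (Ys x)) // ler_norm.
  - exact: integrableZl.
rewrite integral_density //; last by apply: measurable_funD => //; apply: measurable_funM.
under eq_integral do rewrite mulrDl mul1r -mulrA EFinD EFinM.
rewrite integralD //; last exact: integrableZl.
rewrite integralZl // integral_fp /Rintegral -ae_fpE //.
by rewrite EFinD EFinM fineK // (integrable_fin_num measurableT int_Yfp).
Qed.

Variables (dO : measure_display) (Omega : measurableType dO) (Pr : probability Omega R).
Variables (N : nat) (X : 'I_N -> Omega -> T).
Hypothesis iid : iid_sample Pr P X.

Lemma probability_prod_ge_mean (Y : T -> R) (a s K : R) :
  measurable_fun setT Y -> (forall x, `|Y x| <= s)%R -> (`|a| * s < 1)%R -> (0 < K)%R ->
  let q := (1 + a * Rintegral lam setT (fun x => Y x * f x))%R in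
  (0 < q)%R /\
  Pr [set w | (K * q ^+ N <= \prod_(i < N) (1 + a * Y (X i w)))%R] <= K^-1%:E.
Proof.
move=> mY Ys as1 K0 q.
have mX i : measurable_fun setT (X i) by case: iid.
have aY_ge t : (1 - `|a| * s <= 1 + a * Y t)%R.
  have : (`|a * Y t| <= `|a| * s)%R by rewrite normrM ler_wpM2l.
  rewrite ler_norml => /andP[h _]; lra.
have aY0 t : (0 <= 1 + a * Y t)%R by apply: le_trans (aY_ge t); lra.
have maY : measurable_fun setT (fun t => 1 + a * Y t)%R.
  by apply: measurable_funD => //; apply: measurable_funM.
have EaY := expectation_affine_density mY Ys aY0.
have q0 : (0 < q)%R.
  apply: (@lt_le_trans _ _ (1 - `|a| * s)%R); first lra.
  by rewrite -lee_fin -EaY probability_ge_cst //; lra.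
split => //; apply: markov_nonneg.
- apply: measurable_prod => i _; exact: measurableT_comp maY (mX i).
- by move=> w; apply: prodr_ge0 => i _.
- exact: K0.
- exact: exprn_gt0.
- rewrite (expectation_prod_iid iid (h := fun _ t => 1 + a * Y t)%R) //.
    by rewrite EaY prodEFin prodr_const card_ord.
  by move=> i; rewrite EaY.
Qed.

Lemma probability_alpha_deviation (m : nat) (eps D b s : R) (Y : T -> R) :
  measurable_fun setT Y -> (forall x, `|Y x| <= s)%R -> (0 < s)%R ->
  (0 < `|b| < N%:R / s)%R -> (0 < m)%N -> (0 < eps)%R -> (0 < D)%R ->
  Pr [set w | alpha_deviation N m eps D b Y (fun i => X i w)
                (Rintegral lam setT (fun x => Y x * f x) / D)%R]
  <= (eps / (2 * m%:R))%:E.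
Proof.
move=> mY Ys s0 /andP[b0 bN] m0 eps0 D0.
have mX i : measurable_fun setT (X i) by case: iid.
have N0 : (0 < N)%N.
  by rewrite lt0n; apply: contraTneq (lt_trans b0 bN) => ->; rewrite mul0r ltxx.
have as1 := normr_div_mul_lt1 s0 bN.
have K0 : (0 < 2 * m%:R / eps)%R by rewrite divr_gt0 // mulr_gt0 ?ltr0n.
have [q0 Pbad] := probability_prod_ge_mean mY Ys as1 K0.
rewrite -[(eps / _)%R]invf_div; apply: (le_trans _ Pbad); apply: le_measure.
- by apply/mem_set; exact: measurable_alpha_deviation.
- apply/mem_set; rewrite -[X in measurable X]setTI; apply: measurable_fun_le => //.
  apply: measurable_prod => i _; apply: measurable_funD => //.
  by apply: measurable_funM => //; exact: measurableT_comp.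
- move=> w; apply: alpha_deviation_le_prod => // i.
  exact: add1_mul_gt0 (Ys _) as1.
Qed.

Lemma probability_alpha_bounds_fail (m : nat) (eps D b1 b2 s : R) (Y : T -> R) :
  measurable_fun setT Y -> (forall x, `|Y x| <= s)%R -> (0 < s)%R ->
  (0 < b1 < N%:R / s)%R -> (0 < b2 < N%:R / s)%R ->
  (0 < m)%N -> (0 < eps)%R -> (0 < D)%R ->
  Pr ([set w | alpha_deviation N m eps D b1 Y (fun i => X i w)
                (Rintegral lam setT (fun x => Y x * f x) / D)%R] `|`
      [set w | alpha_deviation N m eps D (- b2)%R Y (fun i => X i w)
                (Rintegral lam setT (fun x => Y x * f x) / D)%R])
  <= (eps / m%:R)%:E.
Proof.
move=> mY Ys s0 /andP[b10 b1N] /andP[b20 b2N] m0 eps0 D0.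
have mX i : measurable_fun setT (X i) by case: iid.
apply: le_trans (measureU2 _ _ _) _; [exact: measurable_alpha_deviation..|].
have -> : (eps / m%:R = eps / (2 * m%:R) + eps / (2 * m%:R))%R.
  by field; rewrite pnatr_eq0 -lt0n.
rewrite EFinD; apply: leeD; apply: probability_alpha_deviation => //.
- by rewrite gtr0_norm // b10.
- by rewrite normrN gtr0_norm // b20.
Qed.

End density_sample.

Theorem theorem4 (R : realType) (dT : measure_display) (T : measurableType dT)
  (lam : {measure set T -> \bar R}) (f : T -> R) (P : probability T R)
  (dO : measure_display) (Omega : measurableType dO) (Pr : probability Omega R)
  (N : nat) (X : 'I_N -> Omega -> T)
  (m : nat) (fs : 'I_m -> T -> R) (C : 'I_m -> R) (eps : R)
  (beta1 beta2 : 'I_m -> R) :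
  sigma_finite setT lam ->
  (* f is a density of P w.r.t. lam, and f is in L^2(lam) *)
  measurable_fun setT f ->
  {ae lam, forall x, 0 <= f x} ->
  (forall A, measurable A -> P A = (\int[lam]_(x in A) (f x)%:E)%E) ->
  lam.-integrable setT (fun x => (f x ^+ 2)%:E) ->
  iid_sample Pr P X ->
  (* f_k in L^2 with D_k > 0 and the uniform bound *)
  (forall k, measurable_fun setT (fs k)) ->
  (forall k, lam.-integrable setT (fun x => (fs k x ^+ 2)%:E)) ->
  (forall k, 0 < Rintegral lam setT (fun x => fs k x ^+ 2)) ->
  (forall k, 0 < C k) ->
  (forall k x, `|fs k x| <= Num.sqrt (C k * Rintegral lam setT (fun x => fs k x ^+ 2))) ->
  0 < eps ->
  (forall k, 0 < beta1 k /\
     beta1 k < N%:R / Num.sqrt (C k * Rintegral lam setT (fun x => fs k x ^+ 2))) ->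
  (forall k, 0 < beta2 k /\
     beta2 k < N%:R / Num.sqrt (C k * Rintegral lam setT (fun x => fs k x ^+ 2))) ->
  (Pr [set w | (forall k : 'I_m,
        let Dk := Rintegral lam setT (fun x => fs k x ^+ 2) in
        let abar := Rintegral lam setT (fun x => fs k x * f x) / Dk in
        alpha_inf N m eps Dk (beta1 k) (fs k) (fun i => X i w) <= abar /\
        abar <= alpha_sup N m eps Dk (beta2 k) (fs k) (fun i => X i w))%R]
   >= (1 - eps)%:E)%E.
Proof.
move=> _ mf f0 Pf _ iid mfs _ D0 C0 fsb eps0 b1 b2.
have mX i : measurable_fun setT (X i) by case: iid.
pose D k := Rintegral lam setT (fun x => fs k x ^+ 2).
pose abar k := Rintegral lam setT (fun x => fs k x * f x) / D k.
pose dev k b := [set w | alpha_deviation N m eps (D k) b (fs k) (fun i => X i w) (abar k)].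
pose E k := dev k (beta1 k) `|` dev k (- beta2 k).
have mE k : measurable (E k) by apply: measurableU; exact: measurable_alpha_deviation.
have PE k : (Pr (E k) <= (eps / m%:R)%:E)%E.
  apply: (probability_alpha_bounds_fail mf f0 Pf iid (mfs k) (fsb k)) => //.
  - by rewrite sqrtr_gt0 mulr_gt0.
  - by apply/andP; exact: b1 k.
  - by apply/andP; exact: b2 k.
  - exact: leq_trans (ltn0Sn k) (ltn_ord k).
  - exact: D0.
rewrite (_ : [set w | _] = ~` \big[setU/set0]_(k < m) E k); last first.
  rewrite -bigcup_seq; apply/seteqP; split => w /=.
  - move=> bounds [k _]; have [b10 _] := b1 k; have [b20 _] := b2 k.
    exact: (alpha_boundsP _ _ _ _ _ _ b10 b20).1 (bounds k).
  - move=> nE k; have [b10 _] := b1 k; have [b20 _] := b2 k.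
    apply/(alpha_boundsP _ _ _ _ _ _ b10 b20) => Ek.
    by apply: nE; exists k => //; exact: mem_index_enum.
apply: le_trans (probability_setC_bigsetU_ge mE PE).
by rewrite lee_fin lerB // natr_mul_div_le // ltW.
Qed.
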